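(* Let $V_1\subseteq\mathbb{F}[\mathbf{y}]$ and $V_2\subseteq\mathbb{F}[\mathbf{z}]$ be finite-dimensional vector spaces of polynomials over disjoint sets of variables $\mathbf{y},\mathbf{z}$. Suppose $\mathrm{wt}_1:\mathbf{y}\to\mathbb{N}^k$ and $\mathrm{wt}_2:\mathbf{z}\to\mathbb{N}^k$ are BIWAs for $V_1$ and $V_2$ isolating bases (monomial index sets) $B_1$ and $B_2$ respectively, and let $w:\mathbf{y}\cup\mathbf{z}\to\mathbb{N}$ be a weight assignment that separates $B_1\cdot B_2=\{m_1m_2:m_1\in B_1,m_2\in B_2\}$. Define $\mathrm{wt}:\mathbf{y}\cup\mathbf{z}\to\mathbb{N}^{k+1}$ by $\mathrm{wt}(y_i)=(\mathrm{wt}_1(y_i),w(y_i))$ for $y_i\in\mathbf{y}$ and $\mathrm{wt}(z_i)=(\mathrm{wt}_2(z_i),w(z_i))$ for $z_i\in\mathbf{z}$. Then $\mathrm{wt}$ is a BIWA for $V_1\cdot V_2=\operatorname{span}\{fg:f\in V_1,g\in V_2\}$ (isolating $B_1\cdot B_2$).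
   Context: A weight assignment $\mathrm{wt}:\mathbf{y}\to\mathbb{N}^k$ is extended to monomials additively: $\mathrm{wt}(\prod_i y_i^{e_i})=\sum_ie_i\,\mathrm{wt}(y_i)$. A weight assignment separates a set $S$ of monomials if distinct monomials in $S$ get distinct weights. For a finite-dimensional space $V$ of polynomials, regard $V$ as a matrix whose rows are coefficient vectors of a spanning set and whose columns are indexed by monomials; $V_m$ is the column of monomial $m$. $\mathrm{wt}$ is a BIWA for $V$ isolating $B$ if $B$ is a set of monomials whose columns form a basis of the column space, distinct elements of $B$ have distinct weights, and for every monomial $m\notin B$, $V_m\in\operatorname{span}\{V_{m'}:m'\in B,\ \mathrm{wt}(m')\prec\mathrm{wt}(m)\}$, with $\prec$ the lexicographic order. *)

From HB Require Import structures.
From mathcomp Require Import all_boot all_order all_algebra.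
Set Implicit Arguments. Unset Strict Implicit. Unset Printing Implicit Defensive.
Import GRing.Theory.
Local Open Scope ring_scope.

Definition mon (X : finType) := {ffun X -> nat}.
Definition mon1 (X : finType) : mon X := [ffun=> 0%N].
Definition monmul (X : finType) (a b : mon X) : mon X := [ffun x => (a x + b x)%N].

(* Polynomials over F in variables X: a finite formal sum of terms c * monomial. *)
Definition mpoly (F : fieldType) (X : finType) := seq (F * mon X).
Definition coef (F : fieldType) (X : finType) (p : mpoly F X) (m : mon X) : F :=
  \sum_(t <- p | t.2 == m) t.1.
Definition mulp (F : fieldType) (X : finType) (p q : mpoly F X) : mpoly F X :=
  [seq (a.1 * b.1, monmul a.2 b.2) | a <- p, b <- q].

Definition monl (n m : nat) (a : mon 'I_n) : mon ('I_n + 'I_m)%type :=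
  [ffun v => match v with inl i => a i | inr _ => 0%N end].
Definition monr (n m : nat) (b : mon 'I_m) : mon ('I_n + 'I_m)%type :=
  [ffun v => match v with inl _ => 0%N | inr j => b j end].
Definition polyl (F : fieldType) (n m : nat) (p : mpoly F 'I_n) : mpoly F ('I_n + 'I_m)%type :=
  [seq (t.1, monl m t.2) | t <- p].
Definition polyr (F : fieldType) (n m : nat) (p : mpoly F 'I_m) : mpoly F ('I_n + 'I_m)%type :=
  [seq (t.1, monr n t.2) | t <- p].

Definition monwt1 (X : finType) (w : X -> nat) (a : mon X) : nat :=
  (\sum_(x : X) a x * w x)%N.
Definition monwt (X : finType) (k : nat) (wt : X -> 'I_k -> nat) (a : mon X)
  : {ffun 'I_k -> nat} := [ffun c => monwt1 (fun x => wt x c) a].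

Definition lexlt (k : nat) (u v : {ffun 'I_k -> nat}) : bool :=
  [exists i : 'I_k, (u i < v i)%N && [forall j : 'I_k, (j < i)%N ==> (u j == v j)]].

(* Column V_m of the matrix of a spanning set s (rows = coefficient vectors). *)
Definition colv (F : fieldType) (X : finType) (s : seq (mpoly F X)) (m : mon X)
  : 'rV[F]_(size s) := \row_(i < size s) coef (nth [::] s i) m.
Definition Bmx (F : fieldType) (X : finType) (s : seq (mpoly F X)) (B : seq (mon X))
  : 'M[F]_(size B, size s) := \matrix_(i < size B) colv s (nth (mon1 X) B i).
Definition Bmx_below (F : fieldType) (X : finType) (k : nat) (wt : X -> 'I_k -> nat)
  (s : seq (mpoly F X)) (B : seq (mon X)) (u : {ffun 'I_k -> nat})
  : 'M[F]_(size B, size s) :=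
  \matrix_(i < size B)
    (if lexlt (monwt wt (nth (mon1 X) B i)) u then colv s (nth (mon1 X) B i) else 0).

Definition isBIWA (F : fieldType) (X : finType) (k : nat) (s : seq (mpoly F X))
  (wt : X -> 'I_k -> nat) (B : seq (mon X)) : Prop :=
  [/\ row_free (Bmx s B),
      (forall m : mon X, (colv s m <= Bmx s B)%MS),
      {in B &, forall b1 b2, monwt wt b1 = monwt wt b2 -> b1 = b2} &
      (forall m : mon X, m \notin B -> (colv s m <= Bmx_below wt s B (monwt wt m))%MS)].

Definition separates (X : finType) (w : X -> nat) (S : seq (mon X)) : Prop :=
  {in S &, forall a b, monwt1 w a = monwt1 w b -> a = b}.

Definition prodB (n m : nat) (B1 : seq (mon 'I_n)) (B2 : seq (mon 'I_m))
  : seq (mon ('I_n + 'I_m)%type) := [seq monmul (monl m a) (monr n b) | a <- B1, b <- B2].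
Definition prodsp (F : fieldType) (n m : nat) (s1 : seq (mpoly F 'I_n))
  (s2 : seq (mpoly F 'I_m)) : seq (mpoly F ('I_n + 'I_m)%type) :=
  [seq mulp (polyl m f) (polyr n g) | f <- s1, g <- s2].

Definition combwt (n m k : nat) (wt1 : 'I_n -> 'I_k -> nat) (wt2 : 'I_m -> 'I_k -> nat)
  (w : ('I_n + 'I_m)%type -> nat) (v : ('I_n + 'I_m)%type) (c : 'I_k.+1) : nat :=
  match unlift ord_max c with
  | Some c' => match v with inl i => wt1 i c' | inr j => wt2 j c' end
  | None => w v
  end.

From HB Require Import structures.
From mathcomp Require Import all_boot all_order all_algebra.
From mathcomp Require Import zify mxtens.
Set Implicit Arguments. Unset Strict Implicit. Unset Printing Implicit Defensive.
Import GRing.Theory.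

(* The coefficient of m1 m2 in f g is coef f m1 * coef g m2, so the column
   matrix of V1 V2 is the tensor product of those of V1 and V2; in particular
   the basis columns of B1 B2 are free and span all columns.  Expanding a column
   V_m1 in B1 and V_m2 in B2, only basis monomials of weight below m1 (resp. m2)
   or equal to it occur; if m1 m2 is not in B1 B2, at least one factor is strictly
   below, so the first k coordinates of the combined weight already drop
   lexicographically.  The last coordinate w separates B1 B2, which makes the
   combined weights of B1 B2 pairwise distinct. *)

Definition addwt k (u v : {ffun 'I_k -> nat}) : {ffun 'I_k -> nat} :=
  [ffun c => u c + v c].

Lemma addwtC k (u v : {ffun 'I_k -> nat}) : addwt u v = addwt v u.
Proof. by apply/ffunP => c; rewrite !ffunE addnC. Qed.

Lemma lexltP k (u v : {ffun 'I_k -> nat}) :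
  lexlt u v <-> exists i : 'I_k, u i < v i /\ forall j : 'I_k, j < i -> u j = v j.
Proof.
split.
  case/existsP => i /andP [lt_i /forallP eq_below]; exists i; split => // j lt_ji.
  by apply/eqP; have := eq_below j; rewrite lt_ji.
case=> i [lt_i eq_below]; apply/existsP; exists i; rewrite lt_i /=.
by apply/forallP => j; apply/implyP => lt_ji; rewrite eq_below.
Qed.

Lemma lexlt_add k (u v u' v' : {ffun 'I_k -> nat}) :
  lexlt u v -> lexlt u' v' || (u' == v') -> lexlt (addwt u u') (addwt v v').
Proof.
move=> /lexltP [i [lt_i eq_i]] /orP [/lexltP [i' [lt_i' eq_i']] | /eqP ->];
  apply/lexltP; last first.
  by exists i; split => [|j lt_ji]; rewrite !ffunE; [rewrite ltn_add2r | rewrite eq_i].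
have [le_ii' | lt_i'i] := leqP i i'.
- exists i; split => [|j lt_ji]; rewrite !ffunE.
    have [/val_inj eq_ii' | lt_ii'] := eqVneq (val i) (val i').
      by rewrite -eq_ii' in lt_i'; lia.
    by rewrite eq_i' //; [lia | rewrite ltn_neqAle lt_ii'].
  by rewrite eq_i // eq_i' //; exact: leq_trans lt_ji le_ii'.
- exists i'; split => [|j lt_ji']; rewrite !ffunE.
    by rewrite eq_i //; lia.
  by rewrite eq_i ?eq_i' //; exact: ltn_trans lt_ji' lt_i'i.
Qed.

Definition wt_init k (U : {ffun 'I_k.+1 -> nat}) : {ffun 'I_k -> nat} :=
  [ffun c => U (lift ord_max c)].

Lemma lexlt_init k (U V : {ffun 'I_k.+1 -> nat}) :
  lexlt (wt_init U) (wt_init V) -> lexlt U V.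
Proof.
move=> /lexltP [i [lt_i eq_i]]; apply/lexltP; exists (lift ord_max i).
split; first by move: lt_i; rewrite !ffunE.
move=> j; rewrite lift_max => lt_ji.
have lt_jk : j < k by exact: ltn_trans lt_ji (ltn_ord i).
have -> : j = lift ord_max (Ordinal lt_jk) by apply: val_inj; exact: (esym (lift_max (Ordinal lt_jk))).
by have := eq_i (Ordinal lt_jk) lt_ji; rewrite !ffunE.
Qed.

Definition lexle_mon (X : finType) k (wt : X -> 'I_k -> nat) (a b : mon X) : bool :=
  lexlt (monwt wt a) (monwt wt b) || (a == b).

Section CombinedWeight.
Variables (n m k : nat) (wt1 : 'I_n -> 'I_k -> nat) (wt2 : 'I_m -> 'I_k -> nat).
Variable w : ('I_n + 'I_m)%type -> nat.

Local Notation wt := (combwt wt1 wt2 w).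

Lemma combwt_last M : monwt wt M ord_max = monwt1 w M.
Proof. by rewrite ffunE; apply: eq_bigr => x _; rewrite /combwt unlift_none. Qed.

Lemma combwt_init_monmul a b :
  wt_init (monwt wt (monmul (monl m a) (monr n b))) = addwt (monwt wt1 a) (monwt wt2 b).
Proof.
apply/ffunP => c; rewrite !ffunE /monwt1 big_sumType /=.
by congr (_ + _); apply: eq_bigr => i _; rewrite !ffunE ?addn0 /combwt liftK.
Qed.

Lemma lexlt_combwt a b a' b' :
  lexle_mon wt1 a' a -> lexle_mon wt2 b' b -> (a', b') != (a, b) ->
  lexlt (monwt wt (monmul (monl m a') (monr n b')))
        (monwt wt (monmul (monl m a) (monr n b))).
Proof.
move=> le_a le_b ne_ab; apply: lexlt_init; rewrite !combwt_init_monmul.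
have [eq_a | ne_a] := eqVneq a' a.
- move: le_b ne_ab; rewrite eq_a /lexle_mon xpair_eqE eqxx /=.
  case/orP => [lt_b _ | -> //].
  by rewrite !(addwtC (monwt wt1 a)) (lexlt_add lt_b) // eqxx orbT.
- move: le_a; rewrite /lexle_mon (negbTE ne_a) orbF => lt_a.
  by apply: lexlt_add lt_a _; case/orP: le_b => [-> | /eqP ->]; rewrite ?eqxx ?orbT.
Qed.

End CombinedWeight.

Local Open Scope ring_scope.

Lemma nth_allpairs (S T U : Type) (f : S -> T -> U) (s : seq S) (t : seq T)
  x0 y0 d i j : (i < size s)%N -> (j < size t)%N ->
  nth d [seq f x y | x <- s, y <- t] (i * size t + j) = f (nth x0 s i) (nth y0 t j).
Proof.
elim: s i => [|x s IH] [|i] //= lt_i lt_j.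
  by rewrite mul0n add0n nth_cat size_map lt_j (nth_map y0).
by rewrite nth_cat size_map mulSn -addnA ltnNge leq_addr /= addKn IH.
Qed.

Section MonomialSplit.
Variables (n m : nat).

Definition mon_inl (M : mon ('I_n + 'I_m)%type) : mon 'I_n := [ffun i => M (inl i)].
Definition mon_inr (M : mon ('I_n + 'I_m)%type) : mon 'I_m := [ffun j => M (inr j)].

Lemma monmul_lr M : monmul (monl m (mon_inl M)) (monr n (mon_inr M)) = M.
Proof. by apply/ffunP => -[i|j]; rewrite !ffunE ?addn0. Qed.

Lemma mon_inl_monmul a b : mon_inl (monmul (monl m a) (monr n b)) = a.
Proof. by apply/ffunP => i; rewrite !ffunE addn0. Qed.

Lemma mon_inr_monmul a b : mon_inr (monmul (monl m a) (monr n b)) = b.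
Proof. by apply/ffunP => j; rewrite !ffunE. Qed.

Lemma eq_monmul_lr a b M :
  (monmul (monl m a) (monr n b) == M) = (a == mon_inl M) && (b == mon_inr M).
Proof.
apply/eqP/andP => [<- | [/eqP -> /eqP ->]]; last exact: monmul_lr.
by rewrite mon_inl_monmul mon_inr_monmul.
Qed.

Lemma coefE (F : fieldType) (X : finType) (p : mpoly F X) a :
  coef p a = \sum_(t <- p) (if t.2 == a then t.1 else 0).
Proof. by rewrite /coef big_mkcond. Qed.

Lemma coef_mulp_lr (F : fieldType) (f : mpoly F 'I_n) (g : mpoly F 'I_m) M :
  coef (mulp (polyl m f) (polyr n g)) M = coef f (mon_inl M) * coef g (mon_inr M).
Proof.
rewrite !coefE; elim: f => [|t f IH]; first by rewrite !big_nil mul0r.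
rewrite /= big_cat /= big_map IH big_cons mulrDl; congr (_ + _).
rewrite big_map big_distrr /=; apply: eq_bigr => u _ /=.
by rewrite eq_monmul_lr; case: eqP; case: eqP; rewrite /= ?mulr0 ?mul0r.
Qed.

End MonomialSplit.

Section ProductSpace.
Variables (F : fieldType) (n m : nat).
Variables (s1 : seq (mpoly F 'I_n)) (s2 : seq (mpoly F 'I_m)).
Variables (B1 : seq (mon 'I_n)) (B2 : seq (mon 'I_m)).

Lemma size_prodsp : size (prodsp s1 s2) = (size s1 * size s2)%N.
Proof. exact: size_allpairs. Qed.

Lemma size_prodB : size (prodB B1 B2) = (size B1 * size B2)%N.
Proof. exact: size_allpairs. Qed.

Lemma coef_nth_prodsp j M : (j < size s1 * size s2)%N ->
  coef (nth [::] (prodsp s1 s2) j) M =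
  coef (nth [::] s1 (j %/ size s2)) (mon_inl M) * coef (nth [::] s2 (j %% size s2)) (mon_inr M).
Proof.
move=> lt_j; have s2_gt0 : (0 < size s2)%N by case: (size s2) lt_j; rewrite ?muln0.
rewrite {1}(divn_eq j (size s2)) /prodsp (nth_allpairs _ [::] [::]).
- exact: coef_mulp_lr.
- by rewrite ltn_divLR.
- by rewrite ltn_mod.
Qed.

Lemma nth_prodB i : (i < size B1 * size B2)%N ->
  nth (mon1 _) (prodB B1 B2) i =
  monmul (monl m (nth (mon1 _) B1 (i %/ size B2))) (monr n (nth (mon1 _) B2 (i %% size B2))).
Proof.
move=> lt_i; have B2_gt0 : (0 < size B2)%N by case: (size B2) lt_i; rewrite ?muln0.
rewrite {1}(divn_eq i (size B2)) /prodB (nth_allpairs _ (mon1 _) (mon1 _)).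
- by [].
- by rewrite ltn_divLR.
- by rewrite ltn_mod.
Qed.

Lemma colv_prodsp M : colv (prodsp s1 s2) M =
  castmx (erefl, esym size_prodsp) (colv s1 (mon_inl M) *t colv s2 (mon_inr M)).
Proof.
apply/rowP => j; rewrite castmxE /tensmx !mxE.
by rewrite coef_nth_prodsp // -size_prodsp.
Qed.

Lemma Bmx_prodB : Bmx (prodsp s1 s2) (prodB B1 B2) =
  castmx (esym size_prodB, esym size_prodsp) (Bmx s1 B1 *t Bmx s2 B2).
Proof.
apply/matrixP => i j; rewrite castmxE /tensmx !mxE.
rewrite coef_nth_prodsp -?size_prodsp // nth_prodB -?size_prodB //.
by rewrite mon_inl_monmul mon_inr_monmul.
Qed.

End ProductSpace.

Lemma tensmx11 (R : comNzRingType) p q :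
  (1%:M : 'M[R]_p) *t (1%:M : 'M[R]_q) = 1%:M.
Proof.
apply/matrixP => i j.
case: (mxtens_indexP i) => i1 i2; case: (mxtens_indexP j) => j1 j2.
rewrite tensmxE !mxE (inj_eq (can_inj (@mxtens_indexK _ _))) xpair_eqE.
by case: eqP; case: eqP; rewrite /= ?mulr1 ?mulr0 ?mul0r.
Qed.

Lemma row_free_tensmx (R : fieldType) p1 q1 p2 q2
  (A : 'M[R]_(p1, q1)) (B : 'M[R]_(p2, q2)) :
  row_free A -> row_free B -> row_free (A *t B).
Proof.
move=> /row_freeP [C AC1] /row_freeP [D BD1]; apply/row_freeP.
by exists (C *t D); rewrite tensmx_mul AC1 BD1 tensmx11.
Qed.

Lemma row_free_castmx2 (R : fieldType) p p' q q' (ep : p = p') (eq : q = q')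
  (A : 'M[R]_(p, q)) : row_free (castmx (ep, eq) A) = row_free A.
Proof. by case: p' / ep; case: q' / eq; rewrite castmx_id. Qed.

Lemma castmx_mulmx (R : pzRingType) p p' q q' (ep : p = p') (eq : q = q')
  (x : 'rV[R]_p) (A : 'M[R]_(p, q)) :
  castmx (erefl, eq) (x *m A) = castmx (erefl, ep) x *m castmx (ep, eq) A.
Proof. by case: p' / ep; case: q' / eq. Qed.

Section Decomposition.
Variables (F : fieldType) (X : finType) (k : nat) (wt : X -> 'I_k -> nat).
Variables (s : seq (mpoly F X)) (B : seq (mon X)).

Lemma submx_Bmx_below u (x : 'rV[F]_(size B)) :
  (forall i, x 0 i != 0 -> lexlt (monwt wt (nth (mon1 X) B i)) u) ->
  (x *m Bmx s B <= Bmx_below wt s B u)%MS.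
Proof.
move=> supp_x.
suff -> : x *m Bmx s B = x *m Bmx_below wt s B u by exact: submxMl.
apply/rowP => j; rewrite !mxE; apply: eq_bigr => i _.
have [-> | /supp_x lt_i] := eqVneq (x 0 i) 0; first by rewrite !mul0r.
by rewrite !mxE lt_i mxE.
Qed.

Lemma isBIWA_colv_decomp a : isBIWA s wt B -> exists x : 'rV[F]_(size B),
  colv s a = x *m Bmx s B /\
  forall i, x 0 i != 0 -> lexle_mon wt (nth (mon1 X) B i) a.
Proof.
case=> _ _ _ below_notin.
have [aB | naB] := boolP (a \in B).
  have idx_a : (index a B < size B)%N by rewrite index_mem.
  exists (delta_mx 0 (Ordinal idx_a)); split.
    by rewrite -rowE; apply/rowP => j; rewrite !mxE /= nth_index.
  move=> i; rewrite mxE /= /lexle_mon; case: (i =P Ordinal idx_a) => [-> _ | _]; last by rewrite eqxx.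
  by rewrite /= nth_index ?eqxx ?orbT.
have /submxP [x ->] := below_notin a naB.
pose lt_a i := lexlt (monwt wt (nth (mon1 X) B i)) (monwt wt a).
exists (\row_i (if lt_a i then x 0 i else 0)); split.
  apply/rowP => j; rewrite !mxE; apply: eq_bigr => i _.
  by rewrite !mxE /lt_a; case: ifP; rewrite !mxE ?mul0r ?mulr0.
by move=> i; rewrite mxE /lexle_mon -/(lt_a i); case: (lt_a i); rewrite ?eqxx.
Qed.

End Decomposition.

Lemma prodsp_colv_decomp (F : fieldType) (n m k : nat)
  (s1 : seq (mpoly F 'I_n)) (s2 : seq (mpoly F 'I_m))
  (wt1 : 'I_n -> 'I_k -> nat) (wt2 : 'I_m -> 'I_k -> nat)
  (B1 : seq (mon 'I_n)) (B2 : seq (mon 'I_m)) M :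
  isBIWA s1 wt1 B1 -> isBIWA s2 wt2 B2 ->
  exists x : 'rV[F]_(size (prodB B1 B2)),
    colv (prodsp s1 s2) M = x *m Bmx (prodsp s1 s2) (prodB B1 B2) /\
    forall i : 'I_(size (prodB B1 B2)), x 0 i != 0 ->
      lexle_mon wt1 (nth (mon1 _) B1 (i %/ size B2)) (mon_inl M) &&
      lexle_mon wt2 (nth (mon1 _) B2 (i %% size B2)) (mon_inr M).
Proof.
move=> biwa1 biwa2.
have [x1 [col1 supp1]] := isBIWA_colv_decomp (mon_inl M) biwa1.
have [x2 [col2 supp2]] := isBIWA_colv_decomp (mon_inr M) biwa2.
exists (castmx (erefl, esym (size_prodB B1 B2)) (x1 *t x2)); split.
  by rewrite colv_prodsp col1 col2 -tensmx_mul Bmx_prodB; apply: castmx_mulmx.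
move=> i; rewrite castmxE /tensmx !mxE mulf_eq0 negb_or => /andP [nz1 nz2].
rewrite [X in x1 X _]ord1 in nz1; rewrite [X in x2 X _]ord1 in nz2.
by rewrite (supp1 _ nz1) (supp2 _ nz2).
Qed.

Theorem lemma5p4 (F : fieldType) (n m k : nat)
  (s1 : seq (mpoly F 'I_n)) (s2 : seq (mpoly F 'I_m))
  (wt1 : 'I_n -> 'I_k -> nat) (wt2 : 'I_m -> 'I_k -> nat)
  (B1 : seq (mon 'I_n)) (B2 : seq (mon 'I_m))
  (w : ('I_n + 'I_m)%type -> nat) :
  isBIWA s1 wt1 B1 -> isBIWA s2 wt2 B2 -> separates w (prodB B1 B2) ->
  isBIWA (prodsp s1 s2) (combwt wt1 wt2 w) (prodB B1 B2).
Proof.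
move=> biwa1 biwa2 sep_w.
have [free1 _ _ _] := biwa1; have [free2 _ _ _] := biwa2.
split.
- by rewrite Bmx_prodB row_free_castmx2 row_free_tensmx.
- by move=> M; have [x [-> _]] := prodsp_colv_decomp M biwa1 biwa2; exact: submxMl.
- move=> b1 b2 b1B b2B eq_wt; apply: sep_w => //.
  by rewrite -!(combwt_last wt1 wt2) eq_wt.
- move=> M notin_M; have [x [-> supp_x]] := prodsp_colv_decomp M biwa1 biwa2.
  apply: submx_Bmx_below => i /supp_x /andP [le1 le2].
  have lt_i : (i < size B1 * size B2)%N by rewrite -size_prodB.
  rewrite nth_prodB // -[monwt _ M](congr1 _ (monmul_lr M)).
  apply: lexlt_combwt le1 le2 _; apply: contraNneq notin_M => -[eq1 eq2].
  by rewrite -(monmul_lr M) -eq1 -eq2 -nth_prodB // mem_nth.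
Qed.
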